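(* An HT-interpretation of the signature $\sigma_1$ is isomorphic to a standard HT-interpretation of $\sigma_1$ if and only if it is an $\omega$-model of $\mathit{Std}\cup\mathit{Defs}$.
   Context: Precomputed terms: a totally ordered set containing all numerals $\overline n$ ($n$ an integer, in 1-1 correspondence with the integers), all symbolic constants and possibly other symbols, in which numerals are contiguous and ordered as the integers. Formulas are two-sorted, with sort general and its subsort integer. Signature $\sigma_0$: numerals as integer object constants; other precomputed terms as general object constants; $|\cdot|,+,-,\times$ as function constants on integers; predicate constants $p/n$ (written $p(\mathbf t)$) with general arguments; binary predicate constants $\neq,<,>,\le,\ge$ (''comparison symbols'') with general arguments ($=$ is logical equality). $\sigma_1$ adds, for disjoint lists $\mathbf X,\mathbf V$ of distinct general variables and formula $F$ over $\sigma_0$ with free variables among $\mathbf X,\mathbf V$, predicate constants $\mathit{Atleast}^{\mathbf X;\mathbf V}_F,\mathit{Atmost}^{\mathbf X;\mathbf V}_F$ with $|\mathbf V|+1$ general arguments. Comparison symbols are extensional; $p/n$, $\mathit{Atleast}$, $\mathit{Atmost}$ are intensional. A standard interpretation of $\sigma_0$ has general domain the precomputed terms, integer domain the numerals, object constants denoting themselves, arithmetic symbols with their usual meaning and comparison symbols given by the order on precomputed terms. $\mathit{Std}$: all sentences over $\sigma_0$ without symbols $p/n$ satisfied by standard interpretations. $F^{\mathbf X}_{\mathbf t}$ is substitution. For a precomputed term $r$: $\exists_{\ge r}\mathbf X\,F$ is $\exists\mathbf X_1\cdots\mathbf X_n(\bigwedge_{i=1}^nF^{\mathbf X}_{\mathbf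 X_i}\wedge\bigwedge_{i<j}\neg(\mathbf X_i=\mathbf X_j))$ if $r=\overline n>\overline0$, $\top$ if $r\le\overline0$, $\bot$ if $r>\overline n$ for all $n$; $\exists_{\le r}\mathbf X\,F$ is $\forall\mathbf X_1\cdots\mathbf X_{n+1}(\bigwedge_{i=1}^{n+1}F^{\mathbf X}_{\mathbf X_i}\to\bigvee_{i<j}\mathbf X_i=\mathbf X_j)$ if $r=\overline n\ge\overline0$, $\bot$ if $r<\overline0$, $\top$ if $r>\overline n$ for all $n$. $\mathit{Defs}$: all sentences $\forall\mathbf V(\mathit{Atleast}^{\mathbf X;\mathbf V}_F(\mathbf V,r)\leftrightarrow\exists_{\ge r}\mathbf XF)$ and $\forall\mathbf V(\mathit{Atmost}^{\mathbf X;\mathbf V}_F(\mathbf V,r)\leftrightarrow\exists_{\le r}\mathbf XF)$. HT-interpretations: for an interpretation $I$ of $\sigma_1$ (domains: general, and integer a subset of it), $\sigma_1^I$ adds names $d^*$ for domain elements; $I^{\downarrow}$ is the set of atoms $p(\mathbf d^* )$ with $p$ intensional and $I\models p(\mathbf d^* )$; an HT-interpretation is $\langle\mathcal H,I\rangle$ with $\mathcal H\subseteq I^{\downarrow}$. $\models_{ht}$: intensional atoms $p(\mathbf t)$ hold iff $p(\mathbf d^* )\in\mathcal H$ for $\mathbf d$ the values of $\mathbf t$ in $I$; extensional atoms and equalities iff $I$ satisfies them; $\bot$ never; $\neg F$ iff $I\not\models F$; $\wedge,\vee$ componentwise; $F\to G$ iff ($\not\models_{ht}F$ or $\models_{ht}G$)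 and $I\models F\to G$; $\forall$/$\exists$ over all/some domain elements. An HT-interpretation $\langle\mathcal H,I\rangle$ of $\sigma_1$ is standard if the restriction of $I$ to $\sigma_0$ is standard and $\langle\mathcal H,I\rangle\models_{ht}\mathit{Defs}$. $I$ is an $\omega$-interpretation if every element of the general domain is the value of some precomputed term and every element of the integer domain is the value of some numeral; an $\omega$-model of a set $\Gamma$ of sentences is an HT-interpretation $\langle\mathcal H,I\rangle$ satisfying ($\models_{ht}$) all of $\Gamma$ with $I$ an $\omega$-interpretation. *)

From Stdlib Require Import ZArith List Arith.
Import ListNotations.
Set Implicit Arguments.

Record PTerms := {
  pt :> Type;
  ptle : pt -> pt -> Prop;
  ptle_refl : forall x, ptle x x;
  ptle_antisym : forall x y, ptle x y -> ptle y x -> x = y;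
  ptle_trans : forall x y z, ptle x y -> ptle y z -> ptle x z;
  ptle_total : forall x y, ptle x y \/ ptle y x;
  num : Z -> pt;
  num_le : forall a b, ptle (num a) (num b) <-> (a <= b)%Z;
  num_contig : forall a b x, ptle (num a) x -> ptle x (num b) ->
                 exists n, x = num n
}.

Definition ptlt (PT : PTerms) (x y : PT) : Prop := ptle PT x y /\ x <> y.

Inductive cmpop := CNe | CLt | CGt | CLe | CGe.

Inductive iterm :=
| INum (n : Z)
| IVar (v : nat)
| IAbs (t : iterm)
| IPlus (t u : iterm)
| IMinus (t u : iterm)
| ITimes (t u : iterm).

Inductive gterm (P : Type) :=
| GConst (c : P)
| GVar (v : nat)
| GInt (t : iterm).
Arguments GConst {P} c.
Arguments GVar {P} v.
Arguments GInt {P} t.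

Inductive form (P A : Type) :=
| FAtom (a : A) (ts : list (gterm P))
| FCmp (o : cmpop) (t u : gterm P)
| FEq (t u : gterm P)
| FBot
| FAnd (F G : form P A)
| FOr (F G : form P A)
| FImp (F G : form P A)
| FAllG (x : nat) (F : form P A)
| FExG (x : nat) (F : form P A)
| FAllI (x : nat) (F : form P A)
| FExI (x : nat) (F : form P A).
Arguments FAtom {P A} a ts.
Arguments FCmp {P A} o t u.
Arguments FEq {P A} t u.
Arguments FBot {P A}.
Arguments FAnd {P A} F G.
Arguments FOr {P A} F G.
Arguments FImp {P A} F G.
Arguments FAllG {P A} x F.
Arguments FExG {P A} x F.
Arguments FAllI {P A} x F.
Arguments FExI {P A} x F.

Definition FNeg {P A} (F : form P A) : form P A := FImp F FBot.
Definition FTop {P A} : form P A := FNeg FBot.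
Definition FIff {P A} (F G : form P A) : form P A := FAnd (FImp F G) (FImp G F).

(* sigma_0 atoms: predicate constants p/n, i.e. pairs (name, arity) *)
Definition sym0 (Nm : Type) := (Nm * nat)%type.
Definition form0 (P Nm : Type) := form P (sym0 Nm).

Inductive isym (P Nm : Type) :=
| IP (p : Nm) (n : nat)
| IAtleast (X V : list nat) (F : form0 P Nm)
| IAtmost (X V : list nat) (F : form0 P Nm).
Arguments IP {P Nm} p n.
Arguments IAtleast {P Nm} X V F.
Arguments IAtmost {P Nm} X V F.

Definition form1 (P Nm : Type) := form P (isym P Nm).

Section Syntax.
Context {P A : Type}.

Fixpoint itvars (t : iterm) : list nat :=
  match t with
  | INum _ => []
  | IVar v => [v]
  | IAbs t => itvars t
  | IPlus t u | IMinus t u | ITimes t u => itvars t ++ itvars u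
  end.

Definition gtvarsG (t : gterm P) : list nat :=
  match t with GVar v => [v] | _ => [] end.
Definition gtvarsI (t : gterm P) : list nat :=
  match t with GInt u => itvars u | _ => [] end.

Fixpoint fvG (F : form P A) : list nat :=
  match F with
  | FAtom _ ts => flat_map gtvarsG ts
  | FCmp _ t u | FEq t u => gtvarsG t ++ gtvarsG u
  | FBot => []
  | FAnd F G | FOr F G | FImp F G => fvG F ++ fvG G
  | FAllG x F | FExG x F => remove Nat.eq_dec x (fvG F)
  | FAllI _ F | FExI _ F => fvG F
  end.

Fixpoint fvI (F : form P A) : list nat :=
  match F with
  | FAtom _ ts => flat_map gtvarsI ts
  | FCmp _ t u | FEq t u => gtvarsI t ++ gtvarsI u
  | FBot => []
  | FAnd F G | FOr F G | FImp F G => fvI F ++ fvI G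
  | FAllG _ F | FExG _ F => fvI F
  | FAllI x F | FExI x F => remove Nat.eq_dec x (fvI F)
  end.

Fixpoint avG (F : form P A) : list nat :=
  match F with
  | FAtom _ ts => flat_map gtvarsG ts
  | FCmp _ t u | FEq t u => gtvarsG t ++ gtvarsG u
  | FBot => []
  | FAnd F G | FOr F G | FImp F G => avG F ++ avG G
  | FAllG x F | FExG x F => x :: avG F
  | FAllI _ F | FExI _ F => avG F
  end.

Definition closed (F : form P A) : Prop := fvG F = [] /\ fvI F = [].

Fixpoint no_atoms (F : form P A) : Prop :=
  match F with
  | FAtom _ _ => False
  | FCmp _ _ _ | FEq _ _ | FBot => True
  | FAnd F G | FOr F G | FImp F G => no_atoms F /\ no_atoms G
  | FAllG _ F | FExG _ F | FAllI _ F | FExI _ F => no_atoms F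
  end.

Fixpoint wf (ar : A -> nat -> Prop) (F : form P A) : Prop :=
  match F with
  | FAtom a ts => ar a (length ts)
  | FCmp _ _ _ | FEq _ _ | FBot => True
  | FAnd F G | FOr F G | FImp F G => wf ar F /\ wf ar G
  | FAllG _ F | FExG _ F | FAllI _ F | FExI _ F => wf ar F
  end.

(* renaming of free general variables (used only with fresh targets,
   so no capture can occur) *)
Definition rn_gt (f : nat -> nat) (t : gterm P) : gterm P :=
  match t with GVar v => GVar (f v) | t => t end.

Definition upd_id (f : nat -> nat) (x : nat) : nat -> nat :=
  fun y => if Nat.eqb y x then y else f y.

Fixpoint rename (f : nat -> nat) (F : form P A) : form P A :=
  match F with
  | FAtom a ts => FAtom a (map (rn_gt f) ts)
  | FCmp o t u => FCmp o (rn_gt f t) (rn_gt f u)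
  | FEq t u => FEq (rn_gt f t) (rn_gt f u)
  | FBot => FBot
  | FAnd F G => FAnd (rename f F) (rename f G)
  | FOr F G => FOr (rename f F) (rename f G)
  | FImp F G => FImp (rename f F) (rename f G)
  | FAllG x F => FAllG x (rename (upd_id f x) F)
  | FExG x F => FExG x (rename (upd_id f x) F)
  | FAllI x F => FAllI x (rename f F)
  | FExI x F => FExI x (rename f F)
  end.

Definition submap (X Y : list nat) (v : nat) : nat :=
  match find (fun p => Nat.eqb (fst p) v) (combine X Y) with
  | Some (_, y) => y
  | None => v
  end.

Definition substv (X Y : list nat) (F : form P A) : form P A :=
  rename (submap X Y) F.

Definition exG (xs : list nat) (F : form P A) : form P A := fold_right FExG F xs.
Definition allG (xs : list nat) (F : form P A) : form P A := fold_right FAllG F xs.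
Definition bigand (l : list (form P A)) : form P A := fold_right FAnd FTop l.
Definition bigor (l : list (form P A)) : form P A := fold_right FOr FBot l.

Definition teq (Y Z : list nat) : form P A :=
  bigand (map (fun p => FEq (GVar (fst p)) (GVar (snd p))) (combine Y Z)).

Fixpoint pairs {T : Type} (l : list T) : list (T * T) :=
  match l with
  | [] => []
  | x :: l' => map (fun y => (x, y)) l' ++ pairs l'
  end.

End Syntax.

Fixpoint lift0 {P Nm : Type} (F : form0 P Nm) : form1 P Nm :=
  match F with
  | FAtom (p, n) ts => FAtom (IP p n) ts
  | FCmp o t u => FCmp o t u
  | FEq t u => FEq t u
  | FBot => FBot
  | FAnd F G => FAnd (lift0 F) (lift0 G)
  | FOr F G => FOr (lift0 F) (lift0 G)
  | FImp F G => FImp (lift0 F) (lift0 G)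
  | FAllG x F => FAllG x (lift0 F)
  | FExG x F => FExG x (lift0 F)
  | FAllI x F => FAllI x (lift0 F)
  | FExI x F => FExI x (lift0 F)
  end.

Definition ar0 {Nm : Type} (s : sym0 Nm) (k : nat) : Prop := k = snd s.

(* the sigma_1 symbols Atleast^{X;V}_F / Atmost^{X;V}_F exist only for
   disjoint lists X, V of distinct general variables and a sigma_0
   formula F with free variables among X, V *)
Definition valid_XVF {P Nm : Type} (X V : list nat) (F : form0 P Nm) : Prop :=
  NoDup X /\ NoDup V /\ (forall v, In v X -> ~ In v V) /\
  wf ar0 F /\ (forall v, In v (fvG F) -> In v X \/ In v V) /\ fvI F = [].

Definition valid_isym {P Nm : Type} (a : isym P Nm) : Prop :=
  match a with
  | IP _ _ => True
  | IAtleast X V F | IAtmost X V F => valid_XVF X V F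
  end.

Definition arity {P Nm : Type} (a : isym P Nm) : nat :=
  match a with
  | IP _ n => n
  | IAtleast _ V _ | IAtmost _ V _ => length V + 1
  end.

Definition ar1 {P Nm : Type} (a : isym P Nm) (k : nat) : Prop :=
  valid_isym a /\ k = arity a.

Section Counting.
Context {PT : PTerms} {Nm : Type}.

(* Ys : the lists X_1, ..., X_n of new variables; they are taken fresh
   (distinct, disjoint from each other, from X, V and from all variables
   of F), so that F^X_{X_i} is capture-free *)
Definition fresh_lists (X V : list nat) (F : form0 PT Nm)
    (Ys : list (list nat)) (n : nat) : Prop :=
  length Ys = n /\ (forall Y, In Y Ys -> length Y = length X) /\
  NoDup (concat Ys) /\
  (forall v, In v (concat Ys) -> ~ In v (avG F) /\ ~ In v X /\ ~ In v V).

Definition ex_ge_body (X : list nat) (F : form0 PT Nm) (Ys : list (list nat))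
  : form1 PT Nm :=
  exG (concat Ys)
    (FAnd (bigand (map (fun Y => substv X Y (lift0 F)) Ys))
          (bigand (map (fun p => FNeg (teq (fst p) (snd p))) (pairs Ys)))).

Definition ex_le_body (X : list nat) (F : form0 PT Nm) (Ys : list (list nat))
  : form1 PT Nm :=
  allG (concat Ys)
    (FImp (bigand (map (fun Y => substv X Y (lift0 F)) Ys))
          (bigor (map (fun p => teq (fst p) (snd p)) (pairs Ys)))).

(* B is (a renaming-variant of) \exists_{>= r} X F *)
Definition ExGe (r : PT) (X V : list nat) (F : form0 PT Nm) (B : form1 PT Nm)
  : Prop :=
  (exists n Ys, r = num PT n /\ (0 < n)%Z /\
      fresh_lists X V F Ys (Z.to_nat n) /\ B = ex_ge_body X F Ys)
  \/ (ptle PT r (num PT 0) /\ B = FTop)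
  \/ ((forall n, ptlt PT (num PT n) r) /\ B = FBot).

(* B is (a renaming-variant of) \exists_{<= r} X F *)
Definition ExLe (r : PT) (X V : list nat) (F : form0 PT Nm) (B : form1 PT Nm)
  : Prop :=
  (exists n Ys, r = num PT n /\ (0 <= n)%Z /\
      fresh_lists X V F Ys (Z.to_nat n + 1) /\ B = ex_le_body X F Ys)
  \/ (ptlt PT r (num PT 0) /\ B = FBot)
  \/ ((forall n, ptlt PT (num PT n) r) /\ B = FTop).

Definition Defs (G : form1 PT Nm) : Prop :=
  (exists X V F r B, valid_XVF X V F /\ ExGe r X V F B /\
     G = allG V (FIff (FAtom (IAtleast X V F) (map GVar V ++ [GConst r])) B))
  \/
  (exists X V F r B, valid_XVF X V F /\ ExLe r X V F B /\
     G = allG V (FIff (FAtom (IAtmost X V F) (map GVar V ++ [GConst r])) B)).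

End Counting.

Record interp (PT : PTerms) (Nm D : Type) := {
  isInt : D -> Prop;
  cval : PT -> D;
  cval_int : forall n, isInt (cval (num PT n));
  fabs : {d : D | isInt d} -> {d : D | isInt d};
  fplus : {d : D | isInt d} -> {d : D | isInt d} -> {d : D | isInt d};
  fminus : {d : D | isInt d} -> {d : D | isInt d} -> {d : D | isInt d};
  ftimes : {d : D | isInt d} -> {d : D | isInt d} -> {d : D | isInt d};
  fcmp : cmpop -> D -> D -> Prop;
  fpred : isym PT Nm -> list D -> Prop
}.

Definition Dint {PT Nm D} (I : interp PT Nm D) := {d : D | isInt I d}.

Record htinterp (PT : PTerms) (Nm D : Type) := {
  htI : interp PT Nm D;
  htH : isym PT Nm -> list D -> Prop;
  htH_sub : forall a ds, htH a ds -> fpred htI a ds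
}.

Unset Implicit Arguments.
Section Semantics.
Context {PT : PTerms} {Nm D : Type}.

Definition upd_env {T : Type} (e : nat -> T) (x : nat) (d : T) : nat -> T :=
  fun y => if Nat.eqb y x then d else e y.

Fixpoint ieval (I : interp PT Nm D) (ie : nat -> Dint I) (t : iterm) : Dint I :=
  match t with
  | INum n => exist _ (cval I (num PT n)) (cval_int I n)
  | IVar v => ie v
  | IAbs t => fabs I (ieval I ie t)
  | IPlus t u => fplus I (ieval I ie t) (ieval I ie u)
  | IMinus t u => fminus I (ieval I ie t) (ieval I ie u)
  | ITimes t u => ftimes I (ieval I ie t) (ieval I ie u)
  end.

Definition geval (I : interp PT Nm D) (ge : nat -> D) (ie : nat -> Dint I)
    (t : gterm PT) : D :=
  match t with
  | GConst c => cval I c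
  | GVar v => ge v
  | GInt u => proj1_sig (ieval I ie u)
  end.


Fixpoint sat_cl (I : interp PT Nm D) (ge : nat -> D) (ie : nat -> Dint I)
    (F : form1 PT Nm) : Prop :=
  match F with
  | FAtom a ts => fpred I a (map (geval I ge ie) ts)
  | FCmp o t u => fcmp I o (geval I ge ie t) (geval I ge ie u)
  | FEq t u => geval I ge ie t = geval I ge ie u
  | FBot => False
  | FAnd F G => sat_cl I ge ie F /\ sat_cl I ge ie G
  | FOr F G => sat_cl I ge ie F \/ sat_cl I ge ie G
  | FImp F G => sat_cl I ge ie F -> sat_cl I ge ie G
  | FAllG x F => forall d : D, sat_cl I (upd_env ge x d) ie F
  | FExG x F => exists d : D, sat_cl I (upd_env ge x d) ie F
  | FAllI x F => forall d : Dint I, sat_cl I ge (upd_env ie x d) F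
  | FExI x F => exists d : Dint I, sat_cl I ge (upd_env ie x d) F
  end.


Fixpoint sat_ht (M : htinterp PT Nm D) (ge : nat -> D) (ie : nat -> Dint (htI M))
    (F : form1 PT Nm) : Prop :=
  match F with
  | FAtom a ts => htH M a (map (geval (htI M) ge ie) ts)
  | FCmp o t u => fcmp (htI M) o (geval (htI M) ge ie t) (geval (htI M) ge ie u)
  | FEq t u => geval (htI M) ge ie t = geval (htI M) ge ie u
  | FBot => False
  | FAnd F G => sat_ht M ge ie F /\ sat_ht M ge ie G
  | FOr F G => sat_ht M ge ie F \/ sat_ht M ge ie G
  | FImp F G => (~ sat_ht M ge ie F \/ sat_ht M ge ie G) /\
                sat_cl (htI M) ge ie (FImp F G)
  | FAllG x F => forall d : D, sat_ht M (upd_env ge x d) ie F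
  | FExG x F => exists d : D, sat_ht M (upd_env ge x d) ie F
  | FAllI x F => forall d : Dint (htI M), sat_ht M ge (upd_env ie x d) F
  | FExI x F => exists d : Dint (htI M), sat_ht M ge (upd_env ie x d) F
  end.


(* satisfaction of a sentence (closed formula): independent of the
   assignment, stated for all assignments *)
Definition sat_cl_sent (I : interp PT Nm D) (F : form1 PT Nm) : Prop :=
  forall ge ie, sat_cl I ge ie F.

Definition sat_ht_sent (M : htinterp PT Nm D) (F : form1 PT Nm) : Prop :=
  forall ge ie, sat_ht M ge ie F.

Definition omega_interp (I : interp PT Nm D) : Prop :=
  (forall d : D, exists c : PT, cval I c = d) /\
  (forall d : D, isInt I d -> exists n : Z, d = cval I (num PT n)).

Definition omega_model (M : htinterp PT Nm D) (Gamma : form1 PT Nm -> Prop)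
  : Prop :=
  omega_interp (htI M) /\ forall G, Gamma G -> sat_ht_sent M G.

End Semantics.
Set Implicit Arguments.

Section Standard.
Context {PT : PTerms} {Nm : Type}.

(* the restriction of J to sigma_0 is standard *)
Definition standard_interp (J : interp PT Nm PT) : Prop :=
  (forall d, isInt J d <-> exists n, d = num PT n) /\
  (forall c, cval J c = c) /\
  (forall (x : Dint J) n, proj1_sig x = num PT n ->
      proj1_sig (fabs J x) = num PT (Z.abs n)) /\
  (forall (x y : Dint J) m n, proj1_sig x = num PT m -> proj1_sig y = num PT n ->
      proj1_sig (fplus J x y) = num PT (m + n)) /\
  (forall (x y : Dint J) m n, proj1_sig x = num PT m -> proj1_sig y = num PT n ->
      proj1_sig (fminus J x y) = num PT (m - n)) /\
  (forall (x y : Dint J) m n, proj1_sig x = num PT m -> proj1_sig y = num PT n ->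
      proj1_sig (ftimes J x y) = num PT (m * n)) /\
  (forall d e, fcmp J CNe d e <-> d <> e) /\
  (forall d e, fcmp J CLt d e <-> ptlt PT d e) /\
  (forall d e, fcmp J CGt d e <-> ptlt PT e d) /\
  (forall d e, fcmp J CLe d e <-> ptle PT d e) /\
  (forall d e, fcmp J CGe d e <-> ptle PT e d).

Definition Std (G : form1 PT Nm) : Prop :=
  no_atoms G /\ closed G /\
  forall J : interp PT Nm PT, standard_interp J -> sat_cl_sent J G.

Definition standard_ht (M : htinterp PT Nm PT) : Prop :=
  standard_interp (htI M) /\ forall G, @Defs PT Nm G -> sat_ht_sent M G.

End Standard.

Definition ht_iso {PT : PTerms} {Nm D D' : Type}
    (M : htinterp PT Nm D) (M' : htinterp PT Nm D') (h : D -> D') : Prop :=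
  let I := htI M in let I' := htI M' in
  (forall x y, h x = h y -> x = y) /\
  (forall y, exists x, h x = y) /\
  (forall d, isInt I d <-> isInt I' (h d)) /\
  (forall c, h (cval I c) = cval I' c) /\
  (forall (x : Dint I) (x' : Dint I'), proj1_sig x' = h (proj1_sig x) ->
      proj1_sig (fabs I' x') = h (proj1_sig (fabs I x))) /\
  (forall (x y : Dint I) (x' y' : Dint I'),
      proj1_sig x' = h (proj1_sig x) -> proj1_sig y' = h (proj1_sig y) ->
      proj1_sig (fplus I' x' y') = h (proj1_sig (fplus I x y))) /\
  (forall (x y : Dint I) (x' y' : Dint I'),
      proj1_sig x' = h (proj1_sig x) -> proj1_sig y' = h (proj1_sig y) ->
      proj1_sig (fminus I' x' y') = h (proj1_sig (fminus I x y))) /\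
  (forall (x y : Dint I) (x' y' : Dint I'),
      proj1_sig x' = h (proj1_sig x) -> proj1_sig y' = h (proj1_sig y) ->
      proj1_sig (ftimes I' x' y') = h (proj1_sig (ftimes I x y))) /\
  (forall o d e, fcmp I o d e <-> fcmp I' o (h d) (h e)) /\
  (forall (a : isym PT Nm) ds, valid_isym a -> length ds = arity a ->
      (fpred I a ds <-> fpred I' a (map h ds)) /\
      (htH M a ds <-> htH M' a (map h ds))).

Definition ht_isomorphic {PT : PTerms} {Nm D D' : Type}
    (M : htinterp PT Nm D) (M' : htinterp PT Nm D') : Prop :=
  exists h, ht_iso M M' h.

(* An isomorphism preserves both classical and HT-satisfaction of every
   well-formed formula, and the sentences of Std and Defs are well-formed.
   Std consists of atom-free sentences, on which HT-satisfaction is classical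
   satisfaction, so an HT-interpretation isomorphic to a standard one is a
   model of Std and Defs; it is an omega-interpretation because the
   isomorphism identifies every element with the value of a constant.
   Conversely, in an omega-model of Std the map c |-> cval c is onto, and the
   sentences of Std asserting c <> c', the true and false comparisons between
   constants and the arithmetic identities between numerals force it to be
   injective and to respect the integer domain, the arithmetic and the
   comparisons.  Pulling the intensional part of M back along this map gives
   a standard HT-interpretation isomorphic to M, which satisfies Defs because
   M does. *)

From Pilot Require Import Defs.
From Stdlib Require Import ZArith List Classical ProofIrrelevance ClassicalEpsilon.
Import ListNotations.
Set Implicit Arguments.
Unset Strict Implicit.

Lemma wf_of_no_atoms {P A : Type} (ar : A -> nat -> Prop) (F : form P A) :
  no_atoms F -> wf ar F.
Proof. induction F; simpl; tauto. Qed.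

Lemma wf_rename {P A : Type} (ar : A -> nat -> Prop) (F : form P A) :
  forall f, wf ar F -> wf ar (rename f F).
Proof.
  induction F; simpl; intros f W; try (split; destruct W); auto.
  now rewrite length_map.
Qed.

Lemma wf_lift0 {P Nm : Type} (F : form0 P Nm) : wf ar0 F -> wf ar1 (lift0 F).
Proof.
  induction F as [[p n] ts| | | | | | | | | |]; simpl; try tauto.
  intros W. split; [exact I | exact W].
Qed.

Lemma wf_bigand {P A : Type} (ar : A -> nat -> Prop) (l : list (form P A)) :
  (forall F, In F l -> wf ar F) -> wf ar (bigand l).
Proof. induction l; simpl; auto. Qed.

Lemma wf_bigor {P A : Type} (ar : A -> nat -> Prop) (l : list (form P A)) :
  (forall F, In F l -> wf ar F) -> wf ar (bigor l).
Proof. induction l; simpl; auto. Qed.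

Lemma wf_exG {P A : Type} (ar : A -> nat -> Prop) xs (F : form P A) :
  wf ar F -> wf ar (exG xs F).
Proof. induction xs; simpl; auto. Qed.

Lemma wf_allG {P A : Type} (ar : A -> nat -> Prop) xs (F : form P A) :
  wf ar F -> wf ar (allG xs F).
Proof. induction xs; simpl; auto. Qed.

Lemma wf_teq {P A : Type} (ar : A -> nat -> Prop) (Y Z : list nat) :
  wf ar (@teq P A Y Z).
Proof.
  apply wf_bigand. intros F HF.
  apply in_map_iff in HF as (p & <- & _). exact I.
Qed.

Lemma wf_instances {P Nm : Type} (X : list nat) (F : form0 P Nm) Ys :
  wf ar0 F -> wf ar1 (bigand (map (fun Y => substv X Y (lift0 F)) Ys)).
Proof.
  intros W. apply wf_bigand. intros G HG.
  apply in_map_iff in HG as (Y & <- & _).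
  apply wf_rename, wf_lift0, W.
Qed.

Lemma wf_ExGe {PT : PTerms} {Nm : Type} r X V (F : form0 PT Nm) B :
  wf ar0 F -> ExGe r X V F B -> wf ar1 B.
Proof.
  intros W [(n & Ys & _ & _ & _ & ->) | [[_ ->] | [_ ->]]]; try (simpl; tauto).
  apply wf_exG. split; [now apply wf_instances |].
  apply wf_bigand. intros G HG.
  apply in_map_iff in HG as (p & <- & _). split; [apply wf_teq | exact I].
Qed.

Lemma wf_ExLe {PT : PTerms} {Nm : Type} r X V (F : form0 PT Nm) B :
  wf ar0 F -> ExLe r X V F B -> wf ar1 B.
Proof.
  intros W [(n & Ys & _ & _ & _ & ->) | [[_ ->] | [_ ->]]]; try (simpl; tauto).
  apply wf_allG. split; [now apply wf_instances |].
  apply wf_bigor. intros G HG.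
  apply in_map_iff in HG as (p & <- & _). apply wf_teq.
Qed.

Lemma wf_Defs (PT : PTerms) (Nm : Type) (G : form1 PT Nm) : Defs G -> wf ar1 G.
Proof.
  intros [(X & V & F & r & B & Hv & HB & ->) | (X & V & F & r & B & Hv & HB & ->)];
    apply wf_allG;
    assert (Hargs : length (map (@GVar PT) V ++ [GConst r]) = length V + 1)
      by (now rewrite length_app, length_map);
    pose proof Hv as (_ & _ & _ & W & _).
  - assert (Ha : ar1 (IAtleast X V F) (length (map GVar V ++ [GConst r]))) by now split.
    pose proof (wf_ExGe W HB). simpl. tauto.
  - assert (Ha : ar1 (IAtmost X V F) (length (map GVar V ++ [GConst r]))) by now split.
    pose proof (wf_ExLe W HB). simpl. tauto.
Qed.

Lemma sat_ht_no_atoms (PT : PTerms) (Nm D : Type) (M : htinterp PT Nm D)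
    (F : form1 PT Nm) :
  no_atoms F -> forall ge ie, sat_ht M ge ie F <-> sat_cl (htI M) ge ie F.
Proof.
  induction F; simpl; intros Hn ge ie; try tauto.
  - destruct Hn. rewrite IHF1, IHF2 by auto. tauto.
  - destruct Hn. rewrite IHF1, IHF2 by auto. tauto.
  - destruct Hn. rewrite IHF1, IHF2 by auto.
    split; [tauto |]. intros Himp. split; [| exact Himp].
    destruct (classic (sat_cl (htI M) ge ie F1)); tauto.
  - split; intros H d; apply IHF; auto.
  - split; intros [d H]; exists d; apply IHF; auto.
  - split; intros H d; apply IHF; auto.
  - split; intros [d H]; exists d; apply IHF; auto.
Qed.

Definition bitotal {T T' : Type} (R : T -> T' -> Prop) : Prop :=
  (forall t, exists t', R t t') /\ (forall t', exists t, R t t').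

Lemma all_iff_of_bitotal {T T' : Type} (R : T -> T' -> Prop)
    (P : T -> Prop) (Q : T' -> Prop) :
  bitotal R -> (forall t t', R t t' -> P t <-> Q t') ->
  (forall t, P t) <-> (forall t', Q t').
Proof.
  intros [Htot Hsur] HPQ. split; intros H.
  - intros t'. destruct (Hsur t') as [t Ht]. apply (HPQ t t' Ht). apply H.
  - intros t. destruct (Htot t) as [t' Ht]. apply (HPQ t t' Ht). apply H.
Qed.

Lemma ex_iff_of_bitotal {T T' : Type} (R : T -> T' -> Prop)
    (P : T -> Prop) (Q : T' -> Prop) :
  bitotal R -> (forall t t', R t t' -> P t <-> Q t') ->
  (exists t, P t) <-> (exists t', Q t').
Proof.
  intros [Htot Hsur] HPQ. split; intros [t H].
  - destruct (Htot t) as [t' Ht]. exists t'. apply (HPQ t t' Ht). exact H.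
  - destruct (Hsur t) as [t0 Ht]. exists t0. apply (HPQ t0 t Ht). exact H.
Qed.

Lemma upd_env_rel {T T' : Type} (R : T -> T' -> Prop) (e : nat -> T) (e' : nat -> T')
    x d d' :
  (forall v, R (e v) (e' v)) -> R d d' ->
  forall v, R (upd_env e x d v) (upd_env e' x d' v).
Proof. intros He Hd v. unfold upd_env. destruct (Nat.eqb v x); auto. Qed.

Section Isomorphism.
Variables (PT : PTerms) (Nm D D' : Type).
Variables (M : htinterp PT Nm D) (M' : htinterp PT Nm D') (h : D -> D').
Hypothesis Hiso : ht_iso M M' h.

Lemma iso_injective x y : h x = h y -> x = y.
Proof. apply Hiso. Qed.

Lemma iso_surjective y : exists x, h x = y.
Proof. apply Hiso. Qed.

Lemma iso_isInt d : isInt (htI M) d <-> isInt (htI M') (h d).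
Proof. apply Hiso. Qed.

Lemma iso_cval c : h (cval (htI M) c) = cval (htI M') c.
Proof. apply Hiso. Qed.

Lemma iso_bitotal : bitotal (fun d d' => d' = h d).
Proof.
  split; [eauto |]. intros d'. destruct (iso_surjective d') as [d <-]. eauto.
Qed.

Lemma iso_Dint_bitotal :
  bitotal (fun (x : Dint (htI M)) (x' : Dint (htI M')) => proj1_sig x' = h (proj1_sig x)).
Proof.
  split.
  - intros [d Hd]. exists (exist _ (h d) (proj1 (iso_isInt d) Hd)). reflexivity.
  - intros [d' Hd']. destruct (iso_surjective d') as [d <-].
    exists (exist _ d (proj2 (iso_isInt d) Hd')). reflexivity.
Qed.

Lemma ieval_iso ie ie' :
  (forall v, proj1_sig (ie' v) = h (proj1_sig (ie v))) ->
  forall t, proj1_sig (ieval (htI M') ie' t) = h (proj1_sig (ieval (htI M) ie t)).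
Proof.
  destruct Hiso as (_ & _ & _ & Hc & Habs & Hplus & Hminus & Htimes & _).
  intros Hie t; induction t; simpl; auto.
Qed.

Lemma geval_iso ge ge' ie ie' :
  (forall v, ge' v = h (ge v)) ->
  (forall v, proj1_sig (ie' v) = h (proj1_sig (ie v))) ->
  forall t, geval (htI M') ge' ie' t = h (geval (htI M) ge ie t).
Proof.
  intros Hge Hie [c | v | t]; simpl; auto using ieval_iso, iso_cval.
Qed.

Lemma map_geval_iso ge ge' ie ie' :
  (forall v, ge' v = h (ge v)) ->
  (forall v, proj1_sig (ie' v) = h (proj1_sig (ie v))) ->
  forall ts, map (geval (htI M') ge' ie') ts = map h (map (geval (htI M) ge ie) ts).
Proof.
  intros Hge Hie ts. rewrite map_map. apply map_ext. exact (geval_iso Hge Hie).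
Qed.

Lemma sat_cl_iso (F : form1 PT Nm) : wf ar1 F ->
  forall ge ge' ie ie',
  (forall v, ge' v = h (ge v)) ->
  (forall v, proj1_sig (ie' v) = h (proj1_sig (ie v))) ->
  sat_cl (htI M) ge ie F <-> sat_cl (htI M') ge' ie' F.
Proof.
  destruct Hiso as (_ & _ & _ & _ & _ & _ & _ & _ & Hcmp & Hatom).
  induction F as [a ts | o t u | t u | | F1 IH1 F2 IH2 | F1 IH1 F2 IH2 | F1 IH1 F2 IH2
                 | x F IH | x F IH | x F IH | x F IH];
    simpl; intros W ge ge' ie ie' Hge Hie;
    rewrite ?(geval_iso Hge Hie).
  - destruct W as [Hvalid Hlen].
    rewrite (map_geval_iso Hge Hie).
    rewrite <- (length_map (geval (htI M) ge ie)) in Hlen.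
    apply (Hatom a _ Hvalid Hlen).
  - apply Hcmp.
  - split; [congruence | apply iso_injective].
  - reflexivity.
  - destruct W as [W1 W2].
    rewrite (IH1 W1 _ _ _ _ Hge Hie), (IH2 W2 _ _ _ _ Hge Hie). reflexivity.
  - destruct W as [W1 W2].
    rewrite (IH1 W1 _ _ _ _ Hge Hie), (IH2 W2 _ _ _ _ Hge Hie). reflexivity.
  - destruct W as [W1 W2].
    rewrite (IH1 W1 _ _ _ _ Hge Hie), (IH2 W2 _ _ _ _ Hge Hie). reflexivity.
  - apply (all_iff_of_bitotal iso_bitotal). intros d d' Hd.
    apply IH; auto. apply (upd_env_rel (R := fun d d' => d' = h d)); auto.
  - apply (ex_iff_of_bitotal iso_bitotal). intros d d' Hd.
    apply IH; auto. apply (upd_env_rel (R := fun d d' => d' = h d)); auto.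
  - apply (all_iff_of_bitotal iso_Dint_bitotal). intros d d' Hd.
    apply IH; auto. apply (upd_env_rel (R := fun x x' => proj1_sig x' = h (proj1_sig x))); auto.
  - apply (ex_iff_of_bitotal iso_Dint_bitotal). intros d d' Hd.
    apply IH; auto. apply (upd_env_rel (R := fun x x' => proj1_sig x' = h (proj1_sig x))); auto.
Qed.

Lemma sat_ht_iso (F : form1 PT Nm) : wf ar1 F ->
  forall ge ge' ie ie',
  (forall v, ge' v = h (ge v)) ->
  (forall v, proj1_sig (ie' v) = h (proj1_sig (ie v))) ->
  sat_ht M ge ie F <-> sat_ht M' ge' ie' F.
Proof.
  destruct Hiso as (_ & _ & _ & _ & _ & _ & _ & _ & Hcmp & Hatom).
  induction F as [a ts | o t u | t u | | F1 IH1 F2 IH2 | F1 IH1 F2 IH2 | F1 IH1 F2 IH2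
                 | x F IH | x F IH | x F IH | x F IH];
    intros W ge ge' ie ie' Hge Hie;
    try (apply (sat_cl_iso W Hge Hie)); simpl in *.
  - destruct W as [Hvalid Hlen].
    rewrite (map_geval_iso Hge Hie).
    rewrite <- (length_map (geval (htI M) ge ie)) in Hlen.
    apply (Hatom a _ Hvalid Hlen).
  - destruct W as [W1 W2].
    rewrite (IH1 W1 _ _ _ _ Hge Hie), (IH2 W2 _ _ _ _ Hge Hie). reflexivity.
  - destruct W as [W1 W2].
    rewrite (IH1 W1 _ _ _ _ Hge Hie), (IH2 W2 _ _ _ _ Hge Hie). reflexivity.
  - destruct W as [W1 W2].
    rewrite (IH1 W1 _ _ _ _ Hge Hie), (IH2 W2 _ _ _ _ Hge Hie),
      (sat_cl_iso W1 Hge Hie), (sat_cl_iso W2 Hge Hie).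
    reflexivity.
  - apply (all_iff_of_bitotal iso_bitotal). intros d d' Hd.
    apply IH; auto. apply (upd_env_rel (R := fun d d' => d' = h d)); auto.
  - apply (ex_iff_of_bitotal iso_bitotal). intros d d' Hd.
    apply IH; auto. apply (upd_env_rel (R := fun d d' => d' = h d)); auto.
  - apply (all_iff_of_bitotal iso_Dint_bitotal). intros d d' Hd.
    apply IH; auto. apply (upd_env_rel (R := fun x x' => proj1_sig x' = h (proj1_sig x))); auto.
  - apply (ex_iff_of_bitotal iso_Dint_bitotal). intros d d' Hd.
    apply IH; auto. apply (upd_env_rel (R := fun x x' => proj1_sig x' = h (proj1_sig x))); auto.
Qed.

Lemma sat_ht_sent_iso (G : form1 PT Nm) :
  wf ar1 G -> sat_ht_sent M G <-> sat_ht_sent M' G.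
Proof.
  intros W. destruct iso_bitotal as [_ Hsur].
  destruct iso_Dint_bitotal as [Hint Hsur_int].
  split; intros HG ge ie.
  - destruct (choice _ Hsur) as [g Hg]. destruct (choice _ Hsur_int) as [i Hi].
    apply (sat_ht_iso (ge := fun v => g (ge v)) (ie := fun v => i (ie v)) W); auto.
  - destruct (choice _ Hint) as [i Hi].
    apply (sat_ht_iso (ge' := fun v => h (ge v)) (ie' := fun v => i (ie v)) W); auto.
Qed.

End Isomorphism.

Lemma omega_interp_of_iso_standard (PT : PTerms) (Nm D : Type)
    (M : htinterp PT Nm D) (S : htinterp PT Nm PT) (h : D -> PT) :
  standard_interp (htI S) -> ht_iso M S h -> omega_interp (htI M).
Proof.
  intros (HS_int & HS_cval & _) Hiso. split.
  - intros d. exists (h d). apply (iso_injective Hiso).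
    rewrite (iso_cval Hiso), HS_cval. reflexivity.
  - intros d Hd. apply (iso_isInt Hiso), HS_int in Hd as [n Hn]. exists n.
    apply (iso_injective Hiso). rewrite (iso_cval Hiso), HS_cval. exact Hn.
Qed.

Lemma omega_model_of_iso_standard (PT : PTerms) (Nm D : Type)
    (M : htinterp PT Nm D) (S : htinterp PT Nm PT) (h : D -> PT) :
  standard_ht S -> ht_iso M S h -> omega_model M (fun G => Std G \/ Defs G).
Proof.
  intros [HS HS_Defs] Hiso.
  split; [exact (omega_interp_of_iso_standard HS Hiso) |].
  intros G [(Hna & _ & HJ) | HG].
  - apply (sat_ht_sent_iso Hiso (wf_of_no_atoms _ Hna)).
    intros ge ie. apply sat_ht_no_atoms; [exact Hna |]. apply HJ, HS.
  - apply (sat_ht_sent_iso Hiso (wf_Defs HG)), HS_Defs, HG.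
Qed.

Section Standardization.
Variables (PT : PTerms) (Nm D : Type) (M : htinterp PT Nm D).

Definition std_cmp (o : cmpop) (d e : PT) : Prop :=
  match o with
  | CNe => d <> e
  | CLt => ptlt PT d e
  | CGt => ptlt PT e d
  | CLe => ptle PT d e
  | CGe => ptle PT e d
  end.

Lemma standard_cval (J : interp PT Nm PT) : standard_interp J -> forall c, cval J c = c.
Proof. intros HJ. apply HJ. Qed.

Lemma standard_fcmp (J : interp PT Nm PT) :
  standard_interp J -> forall o d e, fcmp J o d e <-> std_cmp o d e.
Proof. intros (_ & _ & _ & _ & _ & _ & Hne & Hlt & Hgt & Hle & Hge) [] d e; auto. Qed.

Definition is_numeral (d : PT) : Prop := exists n, d = num PT n.

Definition numeral (n : Z) : {d : PT | is_numeral d} :=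
  exist _ (num PT n) (ex_intro _ n eq_refl).

Definition numeral_value (x : {d : PT | is_numeral d}) : Z :=
  proj1_sig (constructive_indefinite_description _ (proj2_sig x)).

Lemma num_inj a b : num PT a = num PT b -> a = b.
Proof.
  intros E. apply Z.le_antisymm; apply (num_le PT); rewrite E; apply ptle_refl.
Qed.

Lemma numeral_value_eq x n : proj1_sig x = num PT n -> numeral_value x = n.
Proof.
  unfold numeral_value. destruct (constructive_indefinite_description _ _) as [m Hm].
  simpl. intros E. apply num_inj. rewrite <- Hm, E. reflexivity.
Qed.

Definition pullback_interp : interp PT Nm PT :=
  {| isInt := is_numeral;
     cval := fun c => c;
     cval_int := fun n => ex_intro _ n eq_refl;
     fabs := fun x => numeral (Z.abs (numeral_value x));
     fplus := fun x y => numeral (numeral_value x + numeral_value y);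
     fminus := fun x y => numeral (numeral_value x - numeral_value y);
     ftimes := fun x y => numeral (numeral_value x * numeral_value y);
     fcmp := std_cmp;
     fpred := fun a ds => fpred (htI M) a (map (cval (htI M)) ds) |}.

Definition pullback_ht : htinterp PT Nm PT :=
  {| htI := pullback_interp;
     htH := fun a ds => htH M a (map (cval (htI M)) ds);
     htH_sub := fun a ds H => htH_sub M a _ H |}.

Lemma pullback_interp_standard : standard_interp pullback_interp.
Proof.
  unfold standard_interp; simpl.
  split; [tauto |]. split; [reflexivity |].
  split; [intros x n Hx; now rewrite (numeral_value_eq Hx) |].
  do 3 (split; [intros x y m n Hx Hy; now rewrite (numeral_value_eq Hx), (numeral_value_eq Hy) |]).
  repeat (split; [tauto |]); tauto.
Qed.

Definition int_const (n : Z) : Dint (htI M) :=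
  exist _ (cval (htI M) (num PT n)) (cval_int (htI M) n).

Hypothesis HStd : forall G, Std G -> sat_ht_sent M G.

Lemma sat_Std_sentence (G : form1 PT Nm) :
  no_atoms G -> closed G -> (forall J, standard_interp J -> sat_cl_sent J G) ->
  sat_cl_sent (htI M) G.
Proof.
  intros Hna Hcl HJ ge ie. apply sat_ht_no_atoms; [exact Hna |].
  apply HStd. split; [exact Hna | split; assumption].
Qed.

Lemma cval_injective c c' : cval (htI M) c = cval (htI M) c' -> c = c'.
Proof.
  intros E. apply NNPP. intros Hne.
  refine (sat_Std_sentence (G := FNeg (FEq (GConst c) (GConst c'))) _ _ _
            (fun _ => cval (htI M) c) (fun _ => int_const 0) E).
  - exact (conj I I).
  - split; reflexivity.
  - intros J HJ ge ie. simpl. rewrite !(standard_cval HJ). exact Hne.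
Qed.

Lemma cval_fcmp o c c' :
  fcmp (htI M) o (cval (htI M) c) (cval (htI M) c') <-> std_cmp o c c'.
Proof.
  set (A := FCmp o (GConst c) (GConst c') : form1 PT Nm).
  assert (HA : forall J, standard_interp J -> forall ge ie,
                 sat_cl J ge ie A <-> std_cmp o c c').
  { intros J HJ ge ie. simpl. rewrite !(standard_cval HJ). apply (standard_fcmp HJ). }
  set (ge0 := fun _ : nat => cval (htI M) c). set (ie0 := fun _ : nat => int_const 0).
  destruct (classic (std_cmp o c c')) as [Hcmp | Hncmp]; split; intros H; try tauto.
  - exact (sat_Std_sentence (G := A) I (conj eq_refl eq_refl)
             (fun J HJ ge ie => proj2 (HA J HJ ge ie) Hcmp) ge0 ie0).
  - exfalso. exact (sat_Std_sentence (G := FNeg A) (conj I I) (conj eq_refl eq_refl)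
             (fun J HJ ge ie HAJ => Hncmp (proj1 (HA J HJ ge ie) HAJ)) ge0 ie0 H).
Qed.

Lemma ieval_closed_numeral t n :
  itvars t = [] ->
  (forall (J : interp PT Nm PT) ie, standard_interp J -> proj1_sig (ieval J ie t) = num PT n) ->
  forall ie, proj1_sig (ieval (htI M) ie t) = cval (htI M) (num PT n).
Proof.
  intros Ht HJ ie.
  refine (sat_Std_sentence (G := FEq (GInt t) (GInt (INum n))) I _ _
            (fun _ => cval (htI M) (num PT n)) ie).
  - split; simpl; [reflexivity | now rewrite Ht].
  - intros J HJst ge ie'. simpl. rewrite (standard_cval HJst). apply HJ, HJst.
Qed.

Lemma fabs_int_const n :
  proj1_sig (fabs (htI M) (int_const n)) = cval (htI M) (num PT (Z.abs n)).
Proof.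
  refine (ieval_closed_numeral (t := IAbs (INum n)) eq_refl _ (fun _ => int_const 0)).
  intros J ie (_ & HJ_cval & HJ_abs & _). apply HJ_abs, HJ_cval.
Qed.

Lemma fplus_int_const m n :
  proj1_sig (fplus (htI M) (int_const m) (int_const n)) = cval (htI M) (num PT (m + n)).
Proof.
  refine (ieval_closed_numeral (t := IPlus (INum m) (INum n)) eq_refl _ (fun _ => int_const 0)).
  intros J ie (_ & HJ_cval & _ & HJ_plus & _). apply HJ_plus; apply HJ_cval.
Qed.

Lemma fminus_int_const m n :
  proj1_sig (fminus (htI M) (int_const m) (int_const n)) = cval (htI M) (num PT (m - n)).
Proof.
  refine (ieval_closed_numeral (t := IMinus (INum m) (INum n)) eq_refl _ (fun _ => int_const 0)).
  intros J ie (_ & HJ_cval & _ & _ & HJ_minus & _). apply HJ_minus; apply HJ_cval.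
Qed.

Lemma ftimes_int_const m n :
  proj1_sig (ftimes (htI M) (int_const m) (int_const n)) = cval (htI M) (num PT (m * n)).
Proof.
  refine (ieval_closed_numeral (t := ITimes (INum m) (INum n)) eq_refl _ (fun _ => int_const 0)).
  intros J ie (_ & HJ_cval & _ & _ & _ & HJ_times & _). apply HJ_times; apply HJ_cval.
Qed.

Hypothesis Homega : omega_interp (htI M).

Definition cval_inv (d : D) : PT :=
  proj1_sig (constructive_indefinite_description _ (proj1 Homega d)).

Lemma cval_cval_inv d : cval (htI M) (cval_inv d) = d.
Proof.
  unfold cval_inv. destruct (constructive_indefinite_description _ _) as [c Hc]. exact Hc.
Qed.

Lemma cval_inv_cval c : cval_inv (cval (htI M) c) = c.
Proof. apply cval_injective, cval_cval_inv. Qed.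

Lemma int_const_surj (x : Dint (htI M)) : exists n, x = int_const n.
Proof.
  destruct x as [d Hd]. destruct (proj2 Homega d Hd) as [n ->].
  exists n. unfold int_const. f_equal. apply proof_irrelevance.
Qed.

Lemma iso_int_op1 (f : Dint (htI M) -> Dint (htI M)) (g : Z -> Z) :
  (forall n, proj1_sig (f (int_const n)) = cval (htI M) (num PT (g n))) ->
  forall x (x' : {d : PT | is_numeral d}), proj1_sig x' = cval_inv (proj1_sig x) ->
  proj1_sig (numeral (g (numeral_value x'))) = cval_inv (proj1_sig (f x)).
Proof.
  intros Hf x x' Hx. destruct (int_const_surj x) as [n ->].
  simpl in Hx. rewrite cval_inv_cval in Hx.
  rewrite (numeral_value_eq Hx), Hf, cval_inv_cval. reflexivity.
Qed.

Lemma iso_int_op2 (f : Dint (htI M) -> Dint (htI M) -> Dint (htI M)) (g : Z -> Z -> Z) :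
  (forall m n, proj1_sig (f (int_const m) (int_const n)) = cval (htI M) (num PT (g m n))) ->
  forall x y (x' y' : {d : PT | is_numeral d}),
  proj1_sig x' = cval_inv (proj1_sig x) -> proj1_sig y' = cval_inv (proj1_sig y) ->
  proj1_sig (numeral (g (numeral_value x') (numeral_value y'))) = cval_inv (proj1_sig (f x y)).
Proof.
  intros Hf x y x' y' Hx Hy.
  destruct (int_const_surj x) as [m ->], (int_const_surj y) as [n ->].
  simpl in Hx, Hy. rewrite cval_inv_cval in Hx, Hy.
  rewrite (numeral_value_eq Hx), (numeral_value_eq Hy), Hf, cval_inv_cval. reflexivity.
Qed.

Lemma cval_inv_iso : ht_iso M pullback_ht cval_inv.
Proof.
  unfold ht_iso; simpl.
  split. { intros d e E. rewrite <- (cval_cval_inv d), <- (cval_cval_inv e), E. reflexivity. }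
  split. { intros c. exists (cval (htI M) c). apply cval_inv_cval. }
  split.
  { intros d. split.
    - intros Hd. destruct (proj2 Homega d Hd) as [n ->]. exists n. apply cval_inv_cval.
    - intros [n E]. rewrite <- (cval_cval_inv d), E. apply cval_int. }
  split. { exact cval_inv_cval. }
  split. { exact (iso_int_op1 fabs_int_const). }
  split. { exact (iso_int_op2 fplus_int_const). }
  split. { exact (iso_int_op2 fminus_int_const). }
  split. { exact (iso_int_op2 ftimes_int_const). }
  split. { intros o d e. rewrite <- cval_fcmp, !cval_cval_inv. reflexivity. }
  intros a ds _ _. rewrite map_map, (map_ext _ _ cval_cval_inv), map_id. tauto.
Qed.

Hypothesis HDefs : forall G, Defs G -> sat_ht_sent M G.

Lemma pullback_ht_standard : standard_ht pullback_ht.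
Proof.
  split; [exact pullback_interp_standard |].
  intros G HG. apply (sat_ht_sent_iso cval_inv_iso (wf_Defs HG)), HDefs, HG.
Qed.

End Standardization.

Theorem lemma4 (PT : PTerms) (Nm D : Type) (M : htinterp PT Nm D) :
  (exists S : htinterp PT Nm PT, standard_ht S /\ ht_isomorphic M S) <->
  omega_model M (fun G => Std G \/ Defs G).
Proof.
  split.
  - intros (S & HS & h & Hiso). exact (omega_model_of_iso_standard HS Hiso).
  - intros [Homega Hsat].
    assert (HStd : forall G, Std G -> sat_ht_sent M G) by auto.
    assert (HDefs : forall G, Defs G -> sat_ht_sent M G) by auto.
    exists (pullback_ht M). split.
    + exact (pullback_ht_standard HStd Homega HDefs).
    + exists (cval_inv Homega). exact (cval_inv_iso HStd Homega).
Qed.
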